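(* Let $A\subseteq\mathbb{N}$ be a sum-dominant set with $|A|=6$. Then $A-A$ contains at most $8$ distinct positive elements.
   Context: For a finite set $A\subseteq\mathbb{N}$, the sum set is $A+A=\{a_i+a_j : a_i,a_j\in A\}$ and the difference set is $A-A=\{a_i-a_j : a_i,a_j\in A\}$. The set $A$ is called sum-dominant if $|A+A|>|A-A|$. *)

From HB Require Import structures.
From mathcomp Require Import all_boot all_order all_algebra.
From mathcomp Require Import finmap.
Set Implicit Arguments. Unset Strict Implicit. Unset Printing Implicit Defensive.
Import Order.TTheory GRing.Theory Num.Theory.
Local Open Scope fset_scope.

Definition sumset (A : {fset nat}) : {fset nat} :=
  [fset (a + b)%N | a in A, b in A].

Definition diffset (A : {fset nat}) : {fset int} :=
  [fset ((a%:Z) - (b%:Z))%R | a in A, b in A].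

Definition sum_dominant (A : {fset nat}) : Prop :=
  (#|` diffset A| < #|` sumset A|)%N.

From HB Require Import structures.
From mathcomp Require Import all_boot all_order all_algebra.
From mathcomp Require Import finmap.
From mathcomp Require Import zify.
Import Order.TTheory GRing.Theory Num.Theory.

(** Enumerate A as a_0, ..., a_5.  If the 21 sums a_i + a_j (i <= j) show
    two different coincidences, then |A + A| <= 19.  Otherwise they show at
    most one; since a_i - a_j = a_k - a_l for distinct ordered pairs forces
    the coincidence a_i + a_l = a_j + a_k of sums over distinct unordered
    pairs, that coincidence merges at most 8 of the 30 nonzero differences,
    and |A - A| >= 22 > 21 >= |A + A| contradicts sum-dominance.  Hence
    2P + 1 <= |A - A| < |A + A| <= 19 for the number P of positive
    differences. *)

Set Implicit Arguments. Unset Strict Implicit. Unset Printing Implicit Defensive.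
Local Open Scope fset_scope.

Section Collisions.
Variables (T U : choiceType) (f : T -> U).
Implicit Types (X : {fset T}) (p q r s x y : T).

Lemma imfsetD1_collision X p q :
  p \in X -> p != q -> f p = f q -> f @` (X `\ q) = f @` X.
Proof.
move=> pX pq fpq; apply/fsetP => u; apply/imfsetP/imfsetP => -[x /= xX ->].
  by exists x => //; move: xX; rewrite in_fsetD1 => /andP[].
have [->|xq] := eqVneq x q; first by exists p; rewrite ?in_fsetD1 ?pX ?pq.
by exists x; rewrite // in_fsetD1 xq.
Qed.

Lemma card_imfset_collision X p q :
  p \in X -> q \in X -> p != q -> f p = f q -> (#|` f @` X| < #|` X|)%N.
Proof.
move=> pX qX pq fpq; rewrite -(imfsetD1_collision pX pq fpq).
by rewrite (cardfsD1 q X) qX add1n ltnS leq_imfset_card.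
Qed.

Lemma card_imfset_two_collisions X p q r s :
  p \in X -> q \in X -> r \in X -> s \in X ->
  p != q -> f p = f q -> r != s -> f r = f s ->
  (r, s) != (p, q) -> (r, s) != (q, p) -> (#|` f @` X| + 2 <= #|` X|)%N.
Proof.
move=> pX qX rX sX pq fpq rs frs rs_pq rs_qp.
have pXq : p \in X `\ q by rewrite in_fsetD1 pq.
suff [x [y [xX yX xy fxy]]] :
    exists x y, [/\ x \in X `\ q, y \in X `\ q, x != y & f x = f y].
  have := card_imfset_collision xX yX xy fxy.
  by rewrite (imfsetD1_collision pX pq fpq) (cardfsD1 q X) qX; lia.
have [rq|rq] := eqVneq r q.
  subst r; exists p, s; split => //.
  - by rewrite in_fsetD1 eq_sym rs sX.
  - by apply: contraNneq rs_qp => ->.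
  - by rewrite fpq frs.
have [sq|sq] := eqVneq s q.
  subst s; exists p, r; split => //.
  - by rewrite in_fsetD1 rq rX.
  - by apply: contraNneq rs_pq => ->.
  - by rewrite fpq -frs.
by exists r, s; rewrite !in_fsetD1 rq sq rX sX.
Qed.

Lemma collisions_coincide X p q r s :
  (#|` X| < #|` f @` X| + 2)%N ->
  p \in X -> q \in X -> r \in X -> s \in X ->
  p != q -> f p = f q -> r != s -> f r = f s -> (r, s) \in [:: (p, q); (q, p)].
Proof.
move=> few pX qX rX sX pq fpq rs frs; apply: contraTT few.
rewrite !inE negb_or -leqNgt => /andP[rs_pq rs_qp].
exact: card_imfset_two_collisions pX qX rX sX pq fpq rs frs rs_pq rs_qp.
Qed.

Definition collided X := [fset x in X | f x \in f @` (X `\ x)].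

Lemma collidedP X x :
  reflect (exists y, [/\ x \in X, y \in X, x != y & f x = f y])
          (x \in collided X).
Proof.
rewrite inE; apply: (iffP andP) => [[xX /imfsetP[y /=]]|[y [xX yX xy fxy]]].
  by rewrite in_fsetD1 => /andP[yx yX] ->; exists y; rewrite eq_sym.
by split=> //; apply/imfsetP; exists y; rewrite // in_fsetD1 eq_sym xy.
Qed.

Lemma card_imfset_ge_collided X : (#|` X| - #|` collided X| <= #|` f @` X|)%N.
Proof.
have sub : collided X `<=` X by apply/fsubsetP => x /collidedP[y []].
have inj : {in X `\` collided X &, injective f}.
  move=> x y; rewrite !in_fsetD => /andP[xC xX] /andP[_ yX] fxy.
  by apply/eqP; apply: contraNT xC => xy; apply/collidedP; exists y.
rewrite -(cardfsDS sub).
have <- : #|` f @` (X `\` collided X)| = #|` X `\` collided X|.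
  exact: card_in_imfset.
by apply/fsubset_leq_card/subset_imfset => x; rewrite in_fsetD => /andP[].
Qed.

End Collisions.

Definition index_pairs n := [seq (i, j) | i <- iota 0 n, j <- iota 0 n].

Definition upper_pairs n : {fset nat * nat} :=
  [fset p in [seq p <- index_pairs n | p.1 <= p.2]].

Definition offdiag_pairs n : {fset nat * nat} :=
  [fset p in [seq p <- index_pairs n | p.1 != p.2]].

Lemma mem_index_pairs n i j : ((i, j) \in index_pairs n) = (i < n) && (j < n).
Proof.
apply/allpairsP/andP => [[[i' j'] /=]|[ilt jlt]].
  by rewrite !mem_iota => -[/andP[_ ilt] /andP[_ jlt] [-> ->]].
by exists (i, j); rewrite !mem_iota.
Qed.

Lemma mem_upper_pairs n i j :
  ((i, j) \in upper_pairs n) = [&& i < n, j < n & i <= j].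
Proof. by rewrite inE mem_filter mem_index_pairs andbC -andbA. Qed.

Lemma mem_offdiag_pairs n i j :
  ((i, j) \in offdiag_pairs n) = [&& i < n, j < n & i != j].
Proof. by rewrite inE mem_filter mem_index_pairs andbC -andbA. Qed.

Definition cross_pairs (p q : nat * nat) : {fset nat * nat} :=
  [fset x in [seq (u, w) | u <- [:: p.1; p.2], w <- [:: q.1; q.2]] ++
             [seq (u, w) | u <- [:: q.1; q.2], w <- [:: p.1; p.2]]].

Lemma cross_pairsC p q : cross_pairs p q = cross_pairs q p.
Proof.
by apply/fsetP => x; rewrite !in_fset; apply: perm_mem; rewrite perm_catC.
Qed.

Lemma card_cross_pairs p q : (#|` cross_pairs p q| <= 8)%N.
Proof. by rewrite card_fseq (leq_trans (size_undup _)). Qed.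

Definition sort_pair (p : nat * nat) := (minn p.1 p.2, maxn p.1 p.2).

Lemma sort_pair_upper n i j :
  (i < n)%N -> (j < n)%N -> sort_pair (i, j) \in upper_pairs n.
Proof. by rewrite mem_upper_pairs /=; lia. Qed.

Lemma cross_pairs_sort i j k l :
  (i, j) \in cross_pairs (sort_pair (i, l)) (sort_pair (j, k)).
Proof. by rewrite in_fset mem_cat allpairs_f // !inE /=; lia. Qed.

Section PairSums.
Variable a : nat -> nat.

Definition pair_sum (p : nat * nat) := (a p.1 + a p.2)%N.

Definition pair_diff (p : nat * nat) : int := ((a p.1)%:Z - (a p.2)%:Z)%R.

Lemma pair_sum_sort p : pair_sum (sort_pair p) = pair_sum p.
Proof. by case: p => i j; rewrite /pair_sum /=; case: leqP; rewrite // addnC. Qed.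

Lemma sum_collision_of_diff_collision i j k l :
  i != j -> (i, j) != (k, l) -> pair_diff (i, j) = pair_diff (k, l) ->
  sort_pair (i, l) != sort_pair (j, k) /\
  pair_sum (sort_pair (i, l)) = pair_sum (sort_pair (j, k)).
Proof.
move=> /eqP ij /eqP ijkl diffE; rewrite !pair_sum_sort; split.
  apply/eqP => -[minE maxE].
  have [//|[ik lj]] : i = j \/ (i = k /\ l = j) by lia.
  by apply: ijkl; rewrite ik lj.
by move: diffE; rewrite /pair_diff /pair_sum /=; lia.
Qed.

Lemma collided_pair_diff_cross n x :
  x \in collided pair_diff (offdiag_pairs n) -> exists p q,
    [/\ p \in upper_pairs n, q \in upper_pairs n, p != q,
        pair_sum p = pair_sum q & x \in cross_pairs p q].
Proof.
case: x => i j /collidedP[[k l] [ijO klO ijkl diffE]].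
move: ijO klO; rewrite !mem_offdiag_pairs => /and3P[ilt jlt ij] /and3P[klt llt _].
have [neq sumE] := sum_collision_of_diff_collision ij ijkl diffE.
exists (sort_pair (i, l)), (sort_pair (j, k)).
by split; rewrite ?sort_pair_upper ?cross_pairs_sort.
Qed.

Lemma card_pair_diffs_ge n :
  (#|` upper_pairs n| < #|` pair_sum @` upper_pairs n| + 2)%N ->
  (#|` offdiag_pairs n| - 8 <= #|` pair_diff @` offdiag_pairs n|)%N.
Proof.
move=> few_sum_collisions.
apply: leq_trans (card_imfset_ge_collided _ _); rewrite leq_sub2l //.
have [->|[x0 /collided_pair_diff_cross[p0 [q0 [p0U q0U pq0 spq0 _]]]]] :=
  fset_0Vmem (collided pair_diff (offdiag_pairs n)); first by rewrite cardfs0.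
apply: leq_trans (card_cross_pairs p0 q0).
apply/fsubset_leq_card/fsubsetP => x.
move=> /collided_pair_diff_cross[p [q [pU qU pq spq]]].
have := collisions_coincide few_sum_collisions p0U q0U pU qU pq0 spq0 pq spq.
by rewrite !in_cons in_nil orbF => /orP[] /eqP[-> ->]; rewrite // cross_pairsC.
Qed.

End PairSums.

Lemma card_pos_symmetric (R : numDomainType) (D : {fset R}) :
  0%R \in D -> {in D, forall d, - d \in D}%R ->
  (2 * #|` [fset d in D | 0 < d]%R| + 1 <= #|` D|)%N.
Proof.
move=> D0 DN; set P := [fset d in D | 0 < d]%R.
have PD : P `<=` D by apply/fsubsetP => d; rewrite inE => /andP[].
have nonpos : 0%R |` [fset - d | d in P]%R `<=` D `\` P.
  apply/fsubsetP => e; rewrite in_fsetU in_fset1 in_fsetD.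
  case/orP => [/eqP -> | /imfsetP[d /=]]; first by rewrite D0 !inE ltxx andbF.
  rewrite inE => /andP[dD d_gt0] ->.
  by rewrite DN // !inE oppr_gt0 lt_gtF ?andbF.
have zero_notin : 0%R \notin [fset - d | d in P]%R.
  apply/imfsetP => -[d /=]; rewrite inE => /andP[_ d_gt0] /eqP.
  by rewrite eq_sym oppr_eq0 => /eqP d0; rewrite d0 ltxx in d_gt0.
have cardN : #|` [fset - d | d in P]%R| = #|` P|.
  by apply: card_imfset; exact: oppr_inj.
have := fsubset_leq_card nonpos.
rewrite cardfsU1 zero_notin add1n cardN cardfsDS //.
by move: #|` P| #|` D| => k m; lia.
Qed.

Definition fset_nth (A : {fset nat}) i := nth 0%N (enum_fset A) i.

Section SumAndDifferenceSets.
Variable A : {fset nat}.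

Lemma fset_nthP x : x \in A -> exists2 i, (i < #|` A|)%N & x = fset_nth A i.
Proof.
move=> xA; exists (index x (enum_fset A)); last by rewrite /fset_nth nth_index.
by rewrite index_mem.
Qed.

Lemma mem_fset_nth i : (i < #|` A|)%N -> fset_nth A i \in A.
Proof. exact: mem_nth. Qed.

Lemma card_sumset_le :
  (#|` sumset A| <= #|` pair_sum (fset_nth A) @` upper_pairs #|` A| |)%N.
Proof.
apply/fsubset_leq_card/fsubsetP => _ /imfset2P[x xA [y yA ->]].
have [i ilt ->] := fset_nthP xA; have [j jlt ->] := fset_nthP yA.
apply/imfsetP; exists (sort_pair (i, j)); first exact: sort_pair_upper.
by rewrite pair_sum_sort.
Qed.

Lemma card_diffset_ge :
  (#|` pair_diff (fset_nth A) @` offdiag_pairs #|` A| | <= #|` diffset A|)%N.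
Proof.
apply/fsubset_leq_card/fsubsetP => d /imfsetP[[i j] /=].
rewrite mem_offdiag_pairs => /and3P[ilt jlt _] ->.
apply/imfset2P; exists (fset_nth A i); first exact: mem_fset_nth.
by exists (fset_nth A j); first exact: mem_fset_nth.
Qed.

Lemma diffset0 x : x \in A -> 0%R \in diffset A.
Proof. by move=> xA; apply/imfset2P; exists x => //; exists x; rewrite ?subrr. Qed.

Lemma diffsetN : {in diffset A, forall d, - d \in diffset A}%R.
Proof.
move=> _ /imfset2P[x xA [y yA ->]].
by apply/imfset2P; exists y => //; exists x; rewrite ?opprB.
Qed.

End SumAndDifferenceSets.

Theorem lemma5 (A : {fset nat}) :
  sum_dominant A -> #|` A| = 6 ->
  (#|` [fset d in diffset A | (0 < d)%R]%fset| <= 8)%N.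
Proof.
rewrite /sum_dominant => dominant cardA.
have [x0 x0A] : exists x, x \in A.
  by apply/fset0Pn; apply: contra_eqN cardA => /eqP ->; rewrite cardfs0.
have pos_le :
    (2 * #|` [fset d in diffset A | (0 < d)%R]| + 1 <= #|` diffset A|)%N.
  exact: card_pos_symmetric (diffset0 x0A) (@diffsetN A).
have sums_le := card_sumset_le A; have diffs_ge := card_diffset_ge A.
rewrite cardA in sums_le diffs_ge.
set U := upper_pairs 6 in sums_le; set sums := pair_sum _ @` U in sums_le.
have sums_le_U : (#|` sums| <= #|` U|)%N by exact: leq_imfset_card.
have cardU : #|` U| = 21 by rewrite card_fseq.
have cardO : #|` offdiag_pairs 6| = 30 by rewrite card_fseq.
have [two_collisions|few_collisions] := leqP (#|` sums| + 2) #|` U|; first lia.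
by have := card_pair_diffs_ge few_collisions; lia.
Qed.
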